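(* Let $F$ be a field of characteristic zero. The Lie algebra $W^+(1,0)$ is not simple.
   Context: $W^+(1,0)$ is the subalgebra of $W(1,0)$ spanned by $\{e^{ax}x^i\partial: a,i\in\mathbb N\}$ ($\mathbb N$ the nonnegative integers), where elements are vector fields $f\partial$ with $f$ in the algebra with basis $e^{ax}x^i$ (multiplication adding exponents), $\partial(e^{ax}x^i)=ae^{ax}x^i+ie^{ax}x^{i-1}$, and $[f\partial,g\partial]=(f\partial(g)-g\partial(f))\partial$. *)

From HB Require Import structures.
From mathcomp Require Import all_boot all_algebra.
From mathcomp Require Import mpoly.
Set Implicit Arguments. Unset Strict Implicit. Unset Printing Implicit Defensive.
Import GRing.Theory.
Local Open Scope ring_scope.

(* The commutative algebra A with basis e^{ax} x^i (a, i in N), multiplication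
   adding exponents, is modelled as the polynomial ring F[y, x] in two
   variables: variable 0 is y = e^x, variable 1 is x, and the basis element
   e^{ax} x^i is the monomial 'X_0^a * 'X_1^i. *)
Definition Aalg (F : fieldType) := {mpoly F[2]}.

Definition var_e : 'I_2 := ord0.
Definition var_x : 'I_2 := ord_max.

(* The derivation  d(e^{ax} x^i) = a e^{ax} x^i + i e^{ax} x^{i-1},
   i.e. d = y d/dy + d/dx. *)
Definition dW (F : fieldType) (f : Aalg F) : Aalg F :=
  'X_var_e * mderiv var_e f + mderiv var_x f.

(* Elements of W^+(1,0) are vector fields f d with f in A; we identify f d
   with f.  Bracket: [f d, g d] = (f d(g) - g d(f)) d. *)
Definition Wbr (F : fieldType) (f g : Aalg F) : Aalg F :=
  f * dW g - g * dW f.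

Definition W_ideal (F : fieldType) (I : Aalg F -> Prop) : Prop :=
  [/\ I 0,
      (forall u v, I u -> I v -> I (u + v)),
      (forall (c : F) u, I u -> I (c *: u)) &
      (forall u v, I v -> I (Wbr u v))].

Definition W_simple (F : fieldType) : Prop :=
  (exists u v : Aalg F, Wbr u v != 0) /\
  (forall I : Aalg F -> Prop, W_ideal I ->
     (forall u, I u -> u = 0) \/ (forall u, I u)).

From HB Require Import structures.
From mathcomp Require Import all_boot all_algebra.
From mathcomp Require Import mpoly.
From mathcomp Require Import ring.
Local Open Scope ring_scope.
Import GRing.Theory.

(* The multiples of e^x form a proper nonzero ideal.  Since d(e^x) = e^x,
   d(e^x h) = e^x (h + d h), so [u, e^x h] = e^x (u (h + d h) - h d u) is again
   a multiple of e^x.  The ideal contains e^x but not 1, as every multiple of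
   e^x vanishes at e^x = 0. *)

Lemma mderivXU (R : comNzRingType) (n : nat) (i j : 'I_n) :
  ('X_j : {mpoly R[n]})^`M(i) = (j == i)%:R.
Proof.
rewrite mderivX mnm1E; have [<-|] := eqVneq j i; last by rewrite scale0r.
have -> : (U_(j) - U_(j) = 0)%MM by apply/mnmP => k; rewrite !mnmE subnn.
by rewrite mpolyX0 scale1r.
Qed.

Lemma dW_Xe_mul (F : fieldType) (h : Aalg F) :
  dW ('X_var_e * h) = 'X_var_e * (h + dW h).
Proof. by rewrite /dW !mderivM !mderivXU /=; ring. Qed.

Definition e_multiple {F : fieldType} (u : Aalg F) : Prop :=
  exists h, u = 'X_var_e * h.

Lemma W_ideal_e_multiple (F : fieldType) : W_ideal (@e_multiple F).
Proof.
split.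
- by exists 0; rewrite mulr0.
- by move=> _ _ [a ->] [b ->]; exists (a + b); rewrite mulrDr.
- by move=> c _ [a ->]; exists (c *: a); rewrite scalerAr.
- move=> u _ [h ->]; exists (u * (h + dW h) - h * dW u).
  by rewrite /Wbr dW_Xe_mul; ring.
Qed.

Lemma e_multiple_Xe (F : fieldType) : e_multiple ('X_var_e : Aalg F).
Proof. by exists 1; rewrite mulr1. Qed.

Lemma Xe_neq0 (F : fieldType) : ('X_var_e : Aalg F) != 0.
Proof.
apply: contra_neq (@oner_neq0 F) => Xe0.
by rewrite -(mevalXU (fun _ => 1) var_e) Xe0 meval0.
Qed.

Lemma e_multiple1 (F : fieldType) : ~ e_multiple (1 : Aalg F).
Proof.
move=> [h /(congr1 (meval (fun _ => 0)))].
by rewrite meval1 mevalM mevalXU mul0r => /eqP; rewrite oner_eq0.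
Qed.

Theorem proposition2 (F : fieldType) (hF : [pchar F] =i pred0) :
  ~ W_simple F.
Proof.
move=> [_ /(_ _ (W_ideal_e_multiple F))] [eq0 | all_multiples].
- by move: (Xe_neq0 F); rewrite (eq0 _ (e_multiple_Xe F)) eqxx.
- exact: e_multiple1 (all_multiples 1).
Qed.
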